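(* Let $\mathbf{S}=\mathbf{V}\boldsymbol{\Lambda}\mathbf{V}^{\mathsf{H}}$ and $\mathbf{E}=\mathbf{U}\mathbf{M}\mathbf{U}^{\mathsf{H}}$ be $N\times N$ matrices, with $\mathbf{V}=[\mathbf{v}_1,\dots,\mathbf{v}_N]$ and $\mathbf{U}$ unitary, $\boldsymbol{\Lambda}$ diagonal and $\mathbf{M}=\mathrm{diag}(m_1,\dots,m_N)$ diagonal, such that $\|\mathbf{E}\|\le\varepsilon$. Then there is a matrix $\mathbf{E}_U$ with $\|\mathbf{E}_U\|\le\varepsilon\delta$, where $\delta=(\|\mathbf{U}-\mathbf{V}\|+1)^2-1$, such that for every eigenvector $\mathbf{v}_i$ of $\mathbf{S}$, $$\mathbf{E}\mathbf{v}_i=m_i\mathbf{v}_i+\mathbf{E}_U\mathbf{v}_i.$$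
   Context: $\|\cdot\|$ denotes the spectral (operator) norm. *)

From HB Require Import structures.
From mathcomp Require Import all_boot all_order all_algebra.
From mathcomp Require Import complex.
From mathcomp Require Import boolp classical_sets reals.
Set Implicit Arguments. Unset Strict Implicit. Unset Printing Implicit Defensive.
Import Order.TTheory GRing.Theory Num.Theory.
Local Open Scope ring_scope.
Local Open Scope classical_set_scope.

Definition cabs {R : realType} (z : R[i]) : R := ComplexField.Normc.normc z.

Definition vnorm {R : realType} {n : nat} (x : 'cV[R[i]]_n) : R :=
  Num.sqrt (\sum_(k < n) cabs (x k 0) ^+ 2).

Definition specnorm {R : realType} {n : nat} (A : 'M[R[i]]_n) : R :=
  sup [set vnorm (A *m x) | x in [set x : 'cV[R[i]]_n | vnorm x <= 1]].

Definition adjmx {R : realType} {m n : nat} (A : 'M[R[i]]_(m, n)) : 'M[R[i]]_(n, m) :=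
  (map_mx (@conjc R) A)^T.

Definition unitary {R : realType} {n : nat} (U : 'M[R[i]]_n) : Prop :=
  U *m adjmx U = 1%:M /\ adjmx U *m U = 1%:M.

From HB Require Import structures.
From mathcomp Require Import all_boot all_order all_algebra.
From mathcomp Require Import complex.
From mathcomp Require Import boolp classical_sets reals.
From mathcomp Require Import ring lra.
Set Implicit Arguments.
Unset Strict Implicit.
Unset Printing Implicit Defensive.
Import Order.TTheory GRing.Theory Num.Theory.
Local Open Scope ring_scope.
Local Open Scope classical_set_scope.
Local Open Scope complex_scope.

(* Take E_U := E - V M V^H, so that E_U v_i = E v_i - m_i v_i because V^H v_i is
   the i-th unit vector. As E = U M U^H,
     E_U V = U M U^H (V - U) + (U - V) M,
   and unitary factors do not change the spectral norm, so
   ||E_U|| <= 2 ||U - V|| ||M|| = 2 ||U - V|| ||E|| <= eps ((||U - V|| + 1)^2 - 1). *)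

Lemma lagrange_identity (R : comPzRingType) n (a b : 'I_n -> R) :
  \sum_i \sum_j (a i * b j - a j * b i) ^+ 2 =
  ((\sum_i a i ^+ 2) * (\sum_i b i ^+ 2) - (\sum_i a i * b i) ^+ 2) *+ 2.
Proof.
have eBA : (\sum_i a i ^+ 2) * (\sum_i b i ^+ 2) = \sum_i \sum_j a j ^+ 2 * b i ^+ 2.
  rewrite mulrC big_distrlr; apply: eq_bigr => i _.
  by apply: eq_bigr => j _; rewrite mulrC.
rewrite mulr2n {2}eBA expr2 !big_distrlr -!sumrB -big_split; apply: eq_bigr => i _ /=.
by rewrite -!sumrB -big_split; apply: eq_bigr => j _ /=; ring.
Qed.

Lemma cauchy_schwarz (R : realDomainType) n (a b : 'I_n -> R) :
  (\sum_i a i * b i) ^+ 2 <= (\sum_i a i ^+ 2) * (\sum_i b i ^+ 2).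
Proof.
rewrite -subr_ge0 -(pmulrn_lge0 _ (ltn0Sn 1)) -lagrange_identity.
by apply: sumr_ge0 => i _; apply: sumr_ge0 => j _; apply: sqr_ge0.
Qed.

Lemma minkowski (R : rcfType) n (a b : 'I_n -> R) :
  Num.sqrt (\sum_i (a i + b i) ^+ 2) <=
  Num.sqrt (\sum_i a i ^+ 2) + Num.sqrt (\sum_i b i ^+ 2).
Proof.
have sum_sqr_ge0 (c : 'I_n -> R) : 0 <= \sum_i c i ^+ 2.
  by apply: sumr_ge0 => i _; apply: sqr_ge0.
have cs_sqrt :
    \sum_i a i * b i <= Num.sqrt (\sum_i a i ^+ 2) * Num.sqrt (\sum_i b i ^+ 2).
  rewrite -sqrtrM // (le_trans (ler_norm _)) // -sqrtr_sqr ler_sqrt ?cauchy_schwarz //.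
  exact: mulr_ge0.
rewrite -[X in _ <= X]ger0_norm ?addr_ge0 ?sqrtr_ge0 // -sqrtr_sqr ler_sqrt ?sqr_ge0 //.
rewrite sqrrD !sqr_sqrtr //.
have -> : \sum_i (a i + b i) ^+ 2 =
          \sum_i a i ^+ 2 + \sum_i b i ^+ 2 + (\sum_i a i * b i) *+ 2.
  by rewrite -sumrMnl -!big_split; apply: eq_bigr => i _ /=; ring.
lra.
Qed.

Section ComplexModulus.
Variable R : realType.
Implicit Types (z w : R[i]).

Lemma cabs_norm z : (cabs z)%:C = `|z|.
Proof. by case: z => a b; rewrite normc_def. Qed.

Lemma cabs_ge0 z : 0 <= cabs z.
Proof. by rewrite -ler0c cabs_norm normr_ge0. Qed.

Lemma cabs0 : cabs (0 : R[i]) = 0.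
Proof. by apply: complexI; rewrite cabs_norm normr0. Qed.

Lemma cabsD z w : cabs (z + w) <= cabs z + cabs w.
Proof. by rewrite -lecR rmorphD /= !cabs_norm ler_normD. Qed.

Lemma cabsM z w : cabs (z * w) = cabs z * cabs w.
Proof. by apply: complexI; rewrite rmorphM /= !cabs_norm normrM. Qed.

Lemma cabsN z : cabs (- z) = cabs z.
Proof. by apply: complexI; rewrite !cabs_norm normrN. Qed.

Lemma ger0_cabs (r : R) : 0 <= r -> cabs r%:C = r.
Proof. by move=> r_ge0; apply: complexI; rewrite cabs_norm ger0_norm // ler0c. Qed.

Lemma cabs_sqr z : (cabs z ^+ 2)%:C = z^* * z.
Proof. by rewrite rmorphXn /= cabs_norm sqr_normc mulrC. Qed.

End ComplexModulus.

Section VectorNorm.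
Variable R : realType.

Lemma adjmxM m n p (A : 'M[R[i]]_(m, n)) (B : 'M[R[i]]_(n, p)) :
  adjmx (A *m B) = adjmx B *m adjmx A.
Proof. by rewrite /adjmx map_mxM trmx_mul. Qed.

Lemma adjmxK m n (A : 'M[R[i]]_(m, n)) : adjmx (adjmx A) = A.
Proof. by apply/matrixP => i j; rewrite !mxE conjcK. Qed.

Lemma vnorm_ge0 n (x : 'cV[R[i]]_n) : 0 <= vnorm x.
Proof. exact: sqrtr_ge0. Qed.

Lemma vnorm0 n : vnorm (0 : 'cV[R[i]]_n) = 0.
Proof. by rewrite /vnorm big1 ?sqrtr0 // => k _; rewrite mxE cabs0 expr0n. Qed.

Lemma vnormD n (x y : 'cV[R[i]]_n) : vnorm (x + y) <= vnorm x + vnorm y.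
Proof.
apply: le_trans _ (minkowski (fun k => cabs (x k 0)) (fun k => cabs (y k 0))).
apply: ler_wsqrtr; apply: ler_sum => k _; rewrite mxE.
by rewrite lerXn2r ?nnegrE ?addr_ge0 ?cabs_ge0 ?cabsD.
Qed.

Lemma vnormN n (x : 'cV[R[i]]_n) : vnorm (- x) = vnorm x.
Proof. by rewrite /vnorm; under eq_bigr do rewrite mxE cabsN. Qed.

Lemma vnormZ n c (x : 'cV[R[i]]_n) : vnorm (c *: x) = cabs c * vnorm x.
Proof.
rewrite /vnorm; under eq_bigr do rewrite mxE cabsM exprMn.
by rewrite -mulr_sumr sqrtrM ?sqr_ge0 // sqrtr_sqr ger0_norm // cabs_ge0.
Qed.

Lemma vnorm_sum n m (f : 'I_m -> 'cV[R[i]]_n) :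
  vnorm (\sum_(j < m) f j) <= \sum_(j < m) vnorm (f j).
Proof.
elim/big_ind2: _ => //; first by rewrite vnorm0.
by move=> x1 r1 x2 r2 le1 le2; apply: le_trans (vnormD _ _) (lerD le1 le2).
Qed.

Lemma cabs_le_vnorm n (x : 'cV[R[i]]_n) j : cabs (x j 0) <= vnorm x.
Proof.
rewrite -[cabs _]ger0_norm ?cabs_ge0 // -sqrtr_sqr ler_wsqrtr //.
by rewrite (bigD1 j) //= lerDl sumr_ge0 // => i _; apply: sqr_ge0.
Qed.

Lemma sum_cabs_sqrE n (x : 'cV[R[i]]_n) :
  (\sum_k cabs (x k 0) ^+ 2)%:C = (adjmx x *m x) 0 0.
Proof.
by rewrite rmorph_sum !mxE; apply: eq_bigr => k _; rewrite !mxE; apply: cabs_sqr.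
Qed.

Lemma vnorm_isometry m n (W : 'M[R[i]]_(m, n)) (x : 'cV[R[i]]_n) :
  adjmx W *m W = 1%:M -> vnorm (W *m x) = vnorm x.
Proof.
move=> WW1; rewrite /vnorm; congr Num.sqrt; apply: complexI.
by rewrite !sum_cabs_sqrE adjmxM -mulmxA (mulmxA (adjmx W)) WW1 mul1mx.
Qed.

End VectorNorm.

Section SpectralNorm.
Variables (R : realType) (n : nat).
Implicit Types (A B M U V W : 'M[R[i]]_n) (x : 'cV[R[i]]_n).

Lemma mulmx_vnorm_bounded A :
  exists2 C, 0 <= C & forall x, vnorm (A *m x) <= C * vnorm x.
Proof.
exists (\sum_j vnorm (col j A)) => [|x].
  by rewrite sumr_ge0 // => j _; apply: vnorm_ge0.
have -> : A *m x = \sum_j x j 0 *: col j A.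
  apply/matrixP => i k; rewrite (ord1 k) !mxE summxE.
  by apply: eq_bigr => j _; rewrite !mxE mulrC.
apply: le_trans (vnorm_sum _) _; rewrite mulr_suml ler_sum // => j _.
by rewrite vnormZ mulrC ler_wpM2l ?vnorm_ge0 ?cabs_le_vnorm.
Qed.

Lemma specnorm_has_sup A :
  has_sup [set vnorm (A *m x) | x in [set x : 'cV[R[i]]_n | vnorm x <= 1]].
Proof.
split; first by exists (vnorm (A *m 0)), 0 => //=; rewrite vnorm0 ler01.
have [C C_ge0 AC] := mulmx_vnorm_bounded A.
exists C => _ [x /= x_le1 <-].
by apply: le_trans (AC x) _; rewrite ler_piMr.
Qed.

Lemma specnorm_ub A x : vnorm x <= 1 -> vnorm (A *m x) <= specnorm A.
Proof. by move=> x_le1; apply: sup_upper_bound (specnorm_has_sup A) _ _; exists x. Qed.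

Lemma specnorm_ge0 A : 0 <= specnorm A.
Proof. by have := @specnorm_ub A 0; rewrite mulmx0 vnorm0; apply; apply: ler01. Qed.

Lemma specnorm_le A c :
  (forall x, vnorm x <= 1 -> vnorm (A *m x) <= c) -> specnorm A <= c.
Proof.
move=> Ac; apply: ge_sup; first exact: (specnorm_has_sup A).1.
by move=> _ [x x_le1 <-]; apply: Ac.
Qed.

Lemma vnorm_mulmx_le A x : vnorm (A *m x) <= specnorm A * vnorm x.
Proof.
have [x0|x_neq0] := eqVneq (vnorm x) 0.
  have [C _ AC] := mulmx_vnorm_bounded A.
  by move: (AC x); rewrite x0 !mulr0.
have x_gt0 : 0 < vnorm x by rewrite lt_def x_neq0 vnorm_ge0.
have r_ge0 : 0 <= (vnorm x)^-1 by rewrite invr_ge0 vnorm_ge0.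
have := @specnorm_ub A ((vnorm x)^-1%:C *: x).
rewrite -scalemxAr !vnormZ ger0_cabs // mulVf // lexx => /(_ isT).
by rewrite -ler_pdivrMr // mulrC.
Qed.

Lemma specnormD A B : specnorm (A + B) <= specnorm A + specnorm B.
Proof.
apply: specnorm_le => x x_le1; rewrite mulmxDl.
apply: le_trans (vnormD _ _) (lerD _ _); exact: specnorm_ub.
Qed.

Lemma specnormN A : specnorm (- A) = specnorm A.
Proof.
by rewrite /specnorm; congr sup; apply: eq_imagel => x _; rewrite mulNmx vnormN.
Qed.

Lemma specnormM A B : specnorm (A *m B) <= specnorm A * specnorm B.
Proof.
apply: specnorm_le => x x_le1; rewrite -mulmxA.
apply: le_trans (vnorm_mulmx_le _ _) _; rewrite ler_wpM2l ?specnorm_ge0 //.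
exact: specnorm_ub.
Qed.

Lemma specnorm_isometry W : adjmx W *m W = 1%:M -> specnorm W <= 1.
Proof. by move=> WW1; apply: specnorm_le => x; rewrite vnorm_isometry. Qed.

Lemma unitary_adjmx U : unitary U -> unitary (adjmx U).
Proof. by case=> UU1 UU2; split; rewrite adjmxK. Qed.

Lemma specnorm_unitary_mull U A : unitary U -> specnorm (U *m A) = specnorm A.
Proof.
case=> _ UU1; rewrite /specnorm; congr sup.
by apply: eq_imagel => x _; rewrite -mulmxA vnorm_isometry.
Qed.

Lemma specnorm_unitary_mulr V A : unitary V -> specnorm (A *m V) = specnorm A.
Proof.
move=> uV; have [VV1 VV2] := uV; have [_ VHV1] := unitary_adjmx uV.
have le_mulr W B : adjmx W *m W = 1%:M -> specnorm (B *m W) <= specnorm B.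
  move=> WW1; apply: le_trans (specnormM _ _) _.
  by rewrite ler_piMr ?specnorm_ge0 ?specnorm_isometry.
apply/eqP; rewrite eq_le le_mulr //=.
by rewrite -{1}[A]mulmx1 -VV1 mulmxA le_mulr.
Qed.

Lemma specnorm_unitary_conj U M :
  unitary U -> specnorm (U *m M *m adjmx U) = specnorm M.
Proof.
move=> uU; rewrite specnorm_unitary_mulr ?specnorm_unitary_mull //.
exact: unitary_adjmx.
Qed.

Lemma specnorm_sub_unitary_conj U V M : unitary U -> unitary V ->
  specnorm (U *m M *m adjmx U - V *m M *m adjmx V) <=
  2 * specnorm (U - V) * specnorm M.
Proof.
move=> uU uV; have [_ UU1] := uU; have [_ VV1] := uV.
rewrite -(specnorm_unitary_mulr _ uV).
have -> : (U *m M *m adjmx U - V *m M *m adjmx V) *m V =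
          U *m M *m adjmx U *m (V - U) + (U - V) *m M.
  have conjK W : adjmx W *m W = 1%:M -> W *m M *m adjmx W *m W = W *m M.
    by move=> WW1; rewrite -mulmxA WW1 mulmx1.
  by rewrite mulmxBr !mulmxBl !conjK // addrA subrK.
apply: le_trans (specnormD _ _) _.
apply: le_trans (lerD (specnormM _ _) (specnormM _ _)) _.
by rewrite specnorm_unitary_conj // -opprB specnormN; lra.
Qed.

Lemma unitary_diag_col V (d : 'rV[R[i]]_n) i : unitary V ->
  V *m diag_mx d *m adjmx V *m col i V = d 0 i *: col i V.
Proof.
case=> _ VV1; rewrite colE -!mulmxA (mulmxA (adjmx V)) VV1 mul1mx.
rewrite scalemxAr; congr (_ *m _); apply/matrixP => a b.
by rewrite mul_diag_mx !mxE; case: eqVneq => [->|]; rewrite ?mulr1 ?mulr0.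
Qed.

End SpectralNorm.

Theorem lemma1 (R : realType) (N : nat)
    (S E V U : 'M[R[i]]_N) (lam m : 'rV[R[i]]_N) (eps : R) :
  unitary V -> unitary U ->
  S = V *m diag_mx lam *m adjmx V ->
  E = U *m diag_mx m *m adjmx U ->
  specnorm E <= eps ->
  exists EU : 'M[R[i]]_N,
    specnorm EU <= eps * ((specnorm (U - V) + 1) ^+ 2 - 1) /\
    forall i : 'I_N, E *m col i V = m 0 i *: col i V + EU *m col i V.
Proof.
move=> uV uU _ E_def E_le.
exists (E - V *m diag_mx m *m adjmx V); split; last first.
  by move=> i; rewrite mulmxBl unitary_diag_col // addrC subrK.
have := specnorm_sub_unitary_conj (diag_mx m) uU uV.
rewrite -E_def -(specnorm_unitary_conj (diag_mx m) uU) -E_def.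
have d_ge0 := specnorm_ge0 (U - V); have eps_ge0 := le_trans (specnorm_ge0 E) E_le.
set d := specnorm (U - V) in d_ge0 * => EU_le; apply: le_trans EU_le _.
have -> : (d + 1) ^+ 2 - 1 = d ^+ 2 + 2 * d by ring.
rewrite mulrDr -[2 * d * _]add0r lerD ?mulr_ge0 ?sqr_ge0 //.
by rewrite [eps * _]mulrC ler_wpM2l ?mulr_ge0.
Qed.
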